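(* Let $R$ be a local ring with regular maximal ideal $M$ and residue field $F=R/M$, and let $R_1=E(M)=\{q\in Q(R): qM\subseteq M\}$. Suppose that $R\subseteq R_1$ is a quadratic extension and $R\neq R_1$. Let $R_2=E(\operatorname{Jac} R_1)$. Then: (1) If $R_1$ is a local ring with $\operatorname{Jac} R_1=M$, then $R_1=R_2$ and $R_1/M$ is a field extension of $F$ of degree $2$. (2) If $R_1$ is a local ring with maximal ideal $M_1\neq M$, then $R_1=R+M_1$ and $R_1/M_1\cong F$. (3) If $R_1$ is not a local ring, then $\operatorname{Jac} R_1=M$, $R_1=R_2$, and $R_1/M$ is isomorphic as an $F$-algebra either to $F\times F$, or to $F\times F\times F$, in which case $F=\mathbb{F}_2$. (4) $(\operatorname{Jac} R_1)^2\subseteq M$.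
   Context: All rings are commutative with identity; a local ring is a ring with a unique maximal ideal (not necessarily Noetherian). $Q(R)$ denotes the total ring of quotients of $R$ and $\operatorname{Jac} R$ the Jacobson radical. An ideal is regular if it contains a nonzerodivisor. For a regular fractional ideal $I$ (an $R$-submodule of $Q(R)$ containing a nonzerodivisor with $bI\subseteq R$ for some nonzerodivisor $b\in R$), $E(I)=\{q\in Q(R): qI\subseteq I\}$. An extension of rings $R\subseteq S$ is quadratic if $xy\in xR+yR+R$ for all $x,y\in S$ (equivalently, every $R$-submodule between $R$ and $S$ is a ring). *)

(* Rings are modelled as subsets of a fixed ambient
   commutative ring Q which is the total ring of quotients of R. *)
From HB Require Import structures.
From mathcomp Require Import all_boot all_order all_algebra.
Set Implicit Arguments. Unset Strict Implicit. Unset Printing Implicit Defensive.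
Import GRing.Theory.
Local Open Scope ring_scope.

Section Defs.
Variable Q : comUnitRingType.

Definition set_eq (A B : Q -> Prop) := forall x, A x <-> B x.

Definition subring (R : Q -> Prop) :=
  [/\ R 0, R 1, (forall x y, R x -> R y -> R (x - y))
    & (forall x y, R x -> R y -> R (x * y))].

Definition ideal (S I : Q -> Prop) :=
  [/\ (forall x, I x -> S x), I 0, (forall x y, I x -> I y -> I (x + y))
    & (forall r x, S r -> I x -> I (r * x))].

Definition proper_ideal (S I : Q -> Prop) := ideal S I /\ ~ I 1.

Definition maximal_ideal (S I : Q -> Prop) :=
  proper_ideal S I /\
  forall J, proper_ideal S J -> (forall x, I x -> J x) -> forall x, J x -> I x.

Definition local_with (S M : Q -> Prop) :=
  maximal_ideal S M /\ forall N, maximal_ideal S N -> set_eq N M.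

Definition local (S : Q -> Prop) := exists M, local_with S M.

Definition Jac (S : Q -> Prop) (x : Q) :=
  S x /\ forall N, maximal_ideal S N -> N x.

Definition nzd (R : Q -> Prop) (x : Q) :=
  R x /\ forall y, R y -> x * y = 0 -> y = 0.

Definition total_quotient_ring (R : Q -> Prop) :=
  [/\ subring R, (forall b, nzd R b -> b \is a GRing.unit)
    & forall q, exists a b, [/\ R a, nzd R b & q = a / b]].

Definition regular (R I : Q -> Prop) := exists x, I x /\ nzd R x.

Definition E (I : Q -> Prop) (q : Q) := forall x, I x -> I (q * x).

Definition quadratic (R S : Q -> Prop) :=
  (forall x, R x -> S x) /\
  forall x y, S x -> S y ->
    exists a b c, [/\ R a, R b, R c & x * y = x * a + y * b + c].

(* S/I (with M*S ⊆ I) is an n-dimensional vector space over F = R/M,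
   with basis the images of e 0, ..., e (n-1) *)
Definition residue_basis (R M S I : Q -> Prop) (n : nat) (e : 'I_n -> Q) :=
  [/\ (forall i, S (e i)),
      (forall y, S y -> exists a : 'I_n -> Q,
          (forall i, R (a i)) /\ I (y - \sum_(i < n) a i * e i))
    & (forall a : 'I_n -> Q, (forall i, R (a i)) ->
          I (\sum_(i < n) a i * e i) -> forall i, M (a i))].

Definition residue_dim (R M S I : Q -> Prop) (n : nat) :=
  exists e : 'I_n -> Q, residue_basis R M S I e.

(* S/I is isomorphic, as an F-algebra (F = R/M), to F^n = F x ... x F:
   the preimages e i of the standard unit vectors form an F-basis of S/I
   and are orthogonal idempotents summing to 1 modulo I. *)
Definition residue_split (R M S I : Q -> Prop) (n : nat) :=
  exists e : 'I_n -> Q,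
    [/\ residue_basis R M S I e,
        (forall i j, I (e i * e j - (if i == j then e i else 0)))
      & I (\sum_(i < n) e i - 1)].

(* the residue field R/M is F_2 (given 1 ∉ M) *)
Definition residue_F2 (R M : Q -> Prop) := forall r, R r -> M r \/ M (r - 1).

End Defs.

From Pilot Require Import Defs.
From HB Require Import structures.
From mathcomp Require Import all_boot all_order all_algebra ring.
From mathcomp Require classical_sets.
From Stdlib Require Import Classical.
Set Implicit Arguments. Unset Strict Implicit. Unset Printing Implicit Defensive.
Import GRing.Theory.
Local Open Scope ring_scope.

(* Everything is computed modulo M, an ideal of R1 = E(M) contained in every
   maximal ideal of R1.  As R1 is quadratic over R, modulo M every z in R1
   satisfies z^2 = p z + q and every product satisfies y z = a y + b z + c,
   with p, q, a, b, c in R.  For z in a maximal ideal N, q lies in N ∩ R = M;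
   for z in Jac R1 this forces z^2, and then y z, into M (4).  If R1 is local
   with maximal ideal M1 <> M, expanding y z with z in M1 \ M gives y = b
   modulo M1 with b in R (2).  If R1 is local with maximal ideal M, then R1/M
   is a field, and for e not in R the relation for y e puts y in R + R e (1).
   If R1 is not local, an element separating two maximal ideals yields a
   nontrivial idempotent modulo M, which forces Jac R1 = M; so R1/M is reduced
   and is spanned by primitive orthogonal idempotents.  There are at most
   three of them, and with three the relation for e1 + r e2 forces
   r (r - 1) = 0 in F, i.e. F = F_2 (3). *)

Section SubringsAndIdeals.
Variable Q : comUnitRingType.
Implicit Types (S I J N : Q -> Prop) (x y r : Q).

Lemma subring0 S : subring S -> S 0. Proof. by case. Qed.
Lemma subring1 S : subring S -> S 1. Proof. by case. Qed.
Lemma subringB S x y : subring S -> S x -> S y -> S (x - y).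
Proof. by case=> _ _ + _; apply. Qed.
Lemma subringM S x y : subring S -> S x -> S y -> S (x * y).
Proof. by case=> _ _ _; apply. Qed.
Lemma subringN S x : subring S -> S x -> S (- x).
Proof. by move=> hS Sx; rewrite -sub0r; exact: subringB hS (subring0 hS) Sx. Qed.
Lemma subringD S x y : subring S -> S x -> S y -> S (x + y).
Proof. by move=> hS Sx Sy; rewrite -[y]opprK; exact: subringB hS Sx (subringN hS Sy). Qed.

Lemma ideal_sub S I x : ideal S I -> I x -> S x. Proof. by case=> + _ _ _; apply. Qed.
Lemma ideal0 S I : ideal S I -> I 0. Proof. by case. Qed.
Lemma idealD S I x y : ideal S I -> I x -> I y -> I (x + y).
Proof. by case=> _ _ + _; apply. Qed.
Lemma idealM S I r x : ideal S I -> S r -> I x -> I (r * x).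
Proof. by case=> _ _ _; apply. Qed.
Lemma idealM_r S I x r : ideal S I -> I x -> S r -> I (x * r).
Proof. by move=> hI Ix Sr; rewrite mulrC; exact: idealM hI Sr Ix. Qed.
Lemma idealN S I x : subring S -> ideal S I -> I x -> I (- x).
Proof.
by move=> hS hI Ix; rewrite -mulN1r; exact: idealM hI (subringN hS (subring1 hS)) Ix.
Qed.

Lemma subring_E S I : subring S -> ideal S I -> subring (E I).
Proof.
move=> hS hI; split=> [x Ix|x Ix|x y Ex Ey z Iz|x y Ex Ey z Iz].
- by rewrite mul0r; exact: ideal0 hI.
- by rewrite mul1r.
- by rewrite mulrBl; exact: idealD hI (Ex z Iz) (idealN hS hI (Ey z Iz)).
- by rewrite -mulrA; apply/Ex/Ey.
Qed.

Lemma sub_E S I x : ideal S I -> S x -> E I x.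
Proof. by move=> hI Sx z Iz; exact: idealM hI Sx Iz. Qed.

Lemma ideal_E S I : ideal S I -> ideal (E I) I.
Proof. by move=> hI; split=> [x /(ideal_sub hI)/(sub_E hI)| | |r x Er /Er]; case: hI. Qed.

Lemma E_set_eq I J : set_eq I J -> set_eq (E I) (E J).
Proof. by move=> IJ q; split=> Eq x /IJ /Eq /IJ. Qed.

Lemma maximal_ideal_above S I : Defs.proper_ideal S I ->
  exists2 N, maximal_ideal S N & forall x, I x -> N x.
Proof.
move=> [hI nI1].
(* Admitting empty sets in [P] puts the union of the empty chain in [P]. *)
pose P X := (forall x, ~ X x) \/ (Defs.proper_ideal S X /\ forall x, I x -> X x).
have [|A [[A0|[hA IA]] Amax]] := @classical_sets.Zorn_bigcup Q P.
- move=> F FP Ftot; rewrite /classical_sets.bigcup /classical_sets.mkset /=.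
  have FI X x : F X -> X x -> Defs.proper_ideal S X /\ forall x, I x -> X x.
    by move=> FX Xx; case: (FP X FX) => [/(_ x)|].
  have [[X0 FX0 X00]|noX] := classic (exists2 X, F X & X 0); last first.
    left=> x [X FX Xx]; apply: noX; exists X => //.
    exact: ideal0 (FI X x FX Xx).1.1.
  right; split=> [|x Ix]; last by exists X0 => //; apply: (FI X0 0 FX0 X00).2.
  split=> [|[X FX X1]]; last by case: (FI X 1 FX X1) => -[_ /(_ X1)].
  split=> [x [X FX Xx]||x y [X FX Xx] [Y FY Yy]|r x Sr [X FX Xx]].
  + exact: ideal_sub (FI X x FX Xx).1.1 Xx.
  + by exists X0.
  + have [XY|YX] := Ftot X Y FX FY.
      by exists Y => //; exact: idealD (FI Y y FY Yy).1.1 (XY x Xx) Yy.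
    by exists X => //; exact: idealD (FI X x FX Xx).1.1 Xx (YX y Yy).
  + by exists X => //; exact: idealM (FI X x FX Xx).1.1 Sr Xx.
- exfalso; apply: (Amax I); last by right.
  by split=> [x /A0 | /(_ 0 (ideal0 hI)) /A0].
- exists A => //; split=> // J hJ AJ; apply: NNPP => nJA.
  by apply: (Amax J); [split|right; split=> // x /IA /AJ].
Qed.

Lemma nonunit_maximal S x : subring S -> S x -> ~ (exists2 y, S y & y * x = 1) ->
  exists2 N, maximal_ideal S N & N x.
Proof.
move=> hS Sx nu.
have [|N hN NSx] := @maximal_ideal_above S (fun z => exists2 r, S r & z = r * x).
  split=> [|[r Sr /esym r1]]; last by apply: nu; exists r.
  split=> [z [r Sr ->]| |z w [r Sr ->] [s Ss ->]|s z Ss [r Sr ->]].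
  - exact: subringM.
  - by exists 0; [apply: subring0|rewrite mul0r].
  - by exists (r + s); [apply: subringD|rewrite mulrDl].
  - by exists (s * r); [apply: subringM|rewrite mulrA].
by exists N => //; apply: NSx; exists 1; [apply: subring1|rewrite mul1r].
Qed.

Lemma maximal_ideal_comaximal S N a : subring S -> maximal_ideal S N -> S a -> ~ N a ->
  exists n r, [/\ N n, S r & 1 = n + r * a].
Proof.
move=> hS [[hN nN1] Nmax] Sa nNa; apply: NNPP => nex.
pose J z := exists n r, [/\ N n, S r & z = n + r * a].
have NJ x : N x -> J x.
  by move=> Nx; exists x, 0; split=> //; [apply: subring0|rewrite mul0r addr0].
suff hJ : Defs.proper_ideal S J.
  apply/nNa/(Nmax J hJ NJ).
  by exists 0, 1; split; [apply: ideal0 hN|apply: subring1|rewrite mul1r add0r].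
split=> [|[n [r [Nn Sr E1]]]]; last by apply: nex; exists n, r.
split=> [z [n [r [Nn Sr ->]]]| |z w [n [r [Nn Sr ->]]] [m [s [Nm Ss ->]]]|
         s z Ss [n [r [Nn Sr ->]]]].
- exact: subringD hS (ideal_sub hN Nn) (subringM hS Sr Sa).
- exact: NJ (ideal0 hN).
- exists (n + m), (r + s); split; [exact: idealD hN Nn Nm|exact: subringD|].
  by rewrite mulrDl addrACA.
- exists (s * n), (s * r); split; [exact: idealM hN Ss Nn|exact: subringM|].
  by rewrite mulrDr mulrA.
Qed.

Lemma maximal_ideal_prime S N a b : subring S -> maximal_ideal S N -> S a -> S b ->
  N (a * b) -> ~ N a -> N b.
Proof.
move=> hS hN Sa Sb Nab nNa.
have [n [r [Nn Sr E1]]] := maximal_ideal_comaximal hS hN Sa nNa.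
have hI : ideal S N by case: hN => -[].
have -> : b = b * n + r * (a * b) by rewrite -[b in LHS]mulr1 E1; ring.
exact: idealD hI (idealM hI Sb Nn) (idealM hI Sr Nab).
Qed.

Lemma local_Jac S N : local_with S N -> set_eq (Jac S) N.
Proof.
move=> [hN Nuniq] x; split=> [[_]|Nx]; first exact.
split=> [|N' hN']; first exact: ideal_sub hN.1.1 Nx.
exact/(Nuniq N' hN' x).
Qed.

Lemma ideal_set_eq S I J : set_eq I J -> ideal S I -> ideal S J.
Proof.
move=> IJ hI; split=> [x /IJ /(ideal_sub hI) //||x y /IJ Ix /IJ Iy|r x Sr /IJ Ix]; apply/IJ.
- exact: ideal0 hI.
- exact: idealD hI Ix Iy.
- exact: idealM hI Sr Ix.
Qed.

Lemma local_with_set_eq S N N' : set_eq N N' -> local_with S N -> local_with S N'.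
Proof.
move=> NN' [[[hN nN1] Nmax] Nuniq]; split.
  split=> [|J hJ N'J x Jx]; first by split=> [|/NN' //]; apply: ideal_set_eq NN' hN.
  by apply/NN'/(Nmax J hJ) => // y /NN' /N'J.
move=> N'' hN'' x; have N''N := Nuniq N'' hN'' x.
by split=> [/N''N /NN' | /NN' /N''N].
Qed.

End SubringsAndIdeals.

Section MultipliersOfM.
Variables (Q : comUnitRingType) (R M : Q -> Prop).
Hypotheses (hR : subring R) (hM : local_with R M) (hq : quadratic R (E M)).
Local Notation R1 := (E M).

Lemma M_idealR : ideal R M. Proof. exact: hM.1.1.1. Qed.
Lemma notM1 : ~ M 1. Proof. exact: hM.1.1.2. Qed.
Lemma R1_subring : subring R1. Proof. exact: subring_E hR M_idealR. Qed.
Lemma M_idealR1 : ideal R1 M. Proof. exact: ideal_E M_idealR. Qed.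

(* [by_M e] proves [M x] by checking [x = e] with [ring], then [M e] by
   closure of M under sums, opposites and products with elements of R1. *)
Ltac in_R := first [assumption | apply: (subring1 hR) | apply: (subring0 hR)
  | apply: (ideal_sub M_idealR); assumption
  | apply: (subringD hR); in_R | apply: (subringN hR); in_R | apply: (subringM hR); in_R].
Ltac in_R1 := first [assumption | apply: (subring1 R1_subring)
  | apply: (sub_E M_idealR); in_R | apply: (ideal_sub M_idealR1); assumption
  | apply: (subringD R1_subring); in_R1 | apply: (subringN R1_subring); in_R1
  | apply: (subringM R1_subring); in_R1].
Ltac in_M := first [assumption | apply: (ideal0 M_idealR1)
  | apply: (idealD M_idealR1); in_M | apply: (idealN R1_subring M_idealR1); in_M
  | apply: (idealM_r M_idealR1); [in_M | in_R1]
  | apply: (idealM M_idealR1); [in_R1 | in_M]].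
Ltac by_M e := apply: (@eq_ind_r _ e M); [in_M | ring].

Lemma local_unit r : R r -> ~ M r -> exists2 s, R s & s * r = 1.
Proof.
move=> Rr nMr; apply: NNPP => nu.
have [N hN Nr] := nonunit_maximal hR Rr nu.
exact/nMr/(hM.2 N hN r).
Qed.

Lemma local_unitM r : R r -> ~ M r -> exists2 s, R s & M (s * r - 1).
Proof. by move=> Rr /(local_unit Rr) [s Rs sr1]; exists s => //; rewrite sr1 subrr; in_M. Qed.

Lemma M_cancelR r u : R r -> ~ M r -> R1 u -> M (u * r) -> M u.
Proof.
move=> Rr nMr Ru Mur; have [s Rs Hs] := local_unitM Rr nMr.
by_M (s * (u * r) - u * (s * r - 1)).
Qed.

Lemma M_factorR r u : R r -> R1 u -> M (r * u) -> ~ M u -> M r.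
Proof.
move=> Rr Ru Mru nMu; apply: NNPP => nMr.
by apply/nMu/(M_cancelR Rr nMr Ru); rewrite mulrC.
Qed.

Lemma M_sub_maximal N x : maximal_ideal R1 N -> M x -> N x.
Proof.
move=> hN Mx; apply: NNPP => nNx.
have [n [r [Nn Rr E1]]] :=
  maximal_ideal_comaximal R1_subring hN (ideal_sub M_idealR1 Mx) nNx.
have Mrx : M (r * x) by in_M.
have Rn : R n by rewrite (_ : n = 1 - r * x); [in_R | rewrite E1; ring].
have nMn : ~ M n by move=> Mn; apply: notM1; rewrite E1; in_M.
have [s Rs sn] := local_unit Rn nMn.
by apply: hN.1.2; rewrite -sn; apply: idealM hN.1.1 (sub_E M_idealR Rs) Nn.
Qed.

Lemma maximal_capR N r : maximal_ideal R1 N -> R r -> N r -> M r.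
Proof.
move=> hN Rr Nr; apply: NNPP => nMr; have [s Rs sr] := local_unit Rr nMr.
by apply: hN.1.2; rewrite -sr; apply: idealM hN.1.1 (sub_E M_idealR Rs) Nr.
Qed.

Lemma exists_maximal_R1 : exists N, maximal_ideal R1 N.
Proof. by have [N hN _] := maximal_ideal_above (conj M_idealR1 notM1); exists N. Qed.

Lemma nonunitM_maximal g : R1 g -> ~ (exists2 w, R1 w & M (w * g - 1)) ->
  exists2 N, maximal_ideal R1 N & N g.
Proof.
move=> Rg nu; apply: nonunit_maximal R1_subring Rg _ => -[w Rw wg].
by apply: nu; exists w => //; rewrite wg subrr; in_M.
Qed.

Lemma local_unitM_R1 N g : local_with R1 N -> R1 g -> ~ N g ->
  exists2 w, R1 w & M (w * g - 1).
Proof.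
move=> [_ Nuniq] Rg nNg; apply: NNPP => nu.
have [N' hN' N'g] := nonunitM_maximal Rg nu.
exact/nNg/(Nuniq N' hN' g).
Qed.

Ltac in_N hN := first [assumption | apply: (M_sub_maximal hN); in_M
  | apply: (idealD hN.1.1); in_N hN | apply: (idealN R1_subring hN.1.1); in_N hN
  | apply: (idealM_r hN.1.1); [in_N hN | in_R1]
  | apply: (idealM hN.1.1); [in_R1 | in_N hN]].
Ltac by_N hN e := apply: (@eq_ind_r _ e _); [in_N hN | ring].

Lemma quadraticM x y : R1 x -> R1 y ->
  exists a b c, [/\ R a, R b, R c & M (x * y - (x * a + y * b + c))].
Proof.
move=> Rx Ry; have [a [b [c [Ra Rb Rc ->]]]] := hq.2 x y Rx Ry.
by exists a, b, c; split=> //; rewrite subrr; in_M.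
Qed.

Lemma monicM x : R1 x -> exists p q, [/\ R p, R q & M (x * x - (p * x + q))].
Proof.
move=> Rx; have [a [b [c [Ra Rb Rc Hx]]]] := quadraticM Rx Rx.
by exists (a + b), c; split; [in_R | in_R | by_M (x * x - (x * a + x * b + c))].
Qed.

Lemma Jac_sqrM x : Jac R1 x -> M (x * x).
Proof.
move=> [Rx Jx]; have [p [q [Rp Rq Hx]]] := monicM Rx.
have [N hN] := exists_maximal_R1; have Nx := Jx N hN.
have Mq : M q.
  by apply: (maximal_capR hN Rq); by_N hN (x * (x - p) - (x * x - (p * x + q))).
have [Mp|nMp] := classic (M p); first by by_M ((x * x - (p * x + q)) + p * x + q).
have [w Rw Hw] : exists2 w, R1 w & M (w * (x - p) - 1).
  apply: NNPP => nu; have [|N' hN' N'xp] := nonunitM_maximal _ nu; first by in_R1.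
  apply/nMp/(maximal_capR hN' Rp).
  by have N'x := Jx N' hN'; by_N hN' (x - (x - p)).
have Mx : M x by by_M (w * (x * x - (p * x + q)) + w * q - (w * (x - p) - 1) * x).
by in_M.
Qed.

Lemma Jac_mulM x y : Jac R1 x -> Jac R1 y -> M (x * y).
Proof.
move=> Jx Jy; have Mxx := Jac_sqrM Jx; have Myy := Jac_sqrM Jy.
case: Jx Jy => [Rx Jx] [Ry Jy].
have [a [b [c [Ra Rb Rc Hxy]]]] := quadraticM Rx Ry.
have [N hN] := exists_maximal_R1; have Nx := Jx N hN; have Ny := Jy N hN.
have Mc : M c.
  apply: (maximal_capR hN Rc).
  by by_N hN (x * y - x * a - y * b - (x * y - (x * a + y * b + c))).
have Mxya : M (x * y * a).
  by by_M (x * (y * y) - (y * y) * b - y * c - y * (x * y - (x * a + y * b + c))).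
have Mxyb : M (x * y * b).
  by by_M (y * (x * x) - (x * x) * a - x * c - x * (x * y - (x * a + y * b + c))).
have [Ma|nMa] := classic (M a); last by apply: (M_cancelR Ra nMa _ Mxya); in_R1.
have [Mb|nMb] := classic (M b); last by apply: (M_cancelR Rb nMb _ Mxyb); in_R1.
by by_M ((x * y - (x * a + y * b + c)) + x * a + y * b + c).
Qed.

Lemma M_sub_Jac x : M x -> Jac R1 x.
Proof. by move=> Mx; split=> [|N hN]; [in_R1 | exact: M_sub_maximal hN Mx]. Qed.

(* y z = a y + b z + c: if a is a unit of R this solves for y modulo M1;
   otherwise c lies in M, hence (y - b) z lies in M although z does not. *)
Lemma local_R1_residueR M1 z y : local_with R1 M1 -> M1 z -> ~ M z -> R1 y ->
  exists2 b, R b & M1 (y - b).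
Proof.
move=> hloc M1z nMz Ry; have hM1 := hloc.1; have Rz := ideal_sub hM1.1.1 M1z.
have [a [b [c [Ra Rb Rc Hyz]]]] := quadraticM Ry Rz.
have [Ma|nMa] := classic (M a); last first.
  have [s Rs Hs] := local_unitM Ra nMa.
  exists (- (s * c)); first by in_R.
  by by_N hM1 (s * (y * z) - s * (z * b) - s * (y * z - (y * a + z * b + c))
               - (s * a - 1) * y).
have Mc : M c.
  apply: (maximal_capR hM1 Rc).
  by by_N hM1 (y * z - y * a - z * b - (y * z - (y * a + z * b + c))).
exists b => //; apply: NNPP => nM1yb.
have [|w Rw Hw] := local_unitM_R1 hloc _ nM1yb; first by in_R1.
have Myz : M ((y - b) * z) by by_M ((y * z - (y * a + z * b + c)) + y * a + c).
by apply: nMz; by_M (w * ((y - b) * z) - (w * (y - b) - 1) * z).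
Qed.

Lemma R1_local_maximal_neqM M1 : local_with R1 M1 -> ~ set_eq M1 M ->
  set_eq R1 (fun y => exists r m, [/\ R r, M1 m & y = r + m]) /\
  residue_dim R M R1 M1 1.
Proof.
move=> hloc neqM; have hM1 := hloc.1.
have [z M1z nMz] : exists2 z, M1 z & ~ M z.
  apply: NNPP => nex; apply: neqM => x; split=> [M1x|/(M_sub_maximal hM1)//].
  by apply: NNPP => nMx; apply: nex; exists x.
split=> [y|].
  split=> [Ry|[r [m [Rr M1m ->]]]]; last by have Rm := ideal_sub hM1.1.1 M1m; in_R1.
  have [b Rb Hb] := local_R1_residueR hloc M1z nMz Ry.
  by exists b, (y - b); split=> //; rewrite addrC subrK.
exists (fun _ => 1); split=> [_|y Ry|a Ra].
- exact: subring1 R1_subring.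
- have [b Rb Hb] := local_R1_residueR hloc M1z nMz Ry.
  by exists (fun _ => b); split=> //; rewrite big_ord1 mulr1.
- by rewrite big_ord1 mulr1 => /(maximal_capR hM1 (Ra _)) Ma0 i; rewrite (ord1 i).
Qed.

Lemma local_R1_inverse g : local_with R1 M -> R1 g -> ~ R g ->
  exists p s, [/\ R p, R s & M (g * (s * (g - p)) - 1)].
Proof.
move=> hloc Rg nRg; have [p [q [Rp Rq Hg]]] := monicM Rg.
have nMq : ~ M q.
  move=> Mq; have nMg : ~ M g by move=> /(ideal_sub M_idealR).
  have [w Rw Hw] := local_unitM_R1 hloc Rg nMg.
  have Mgp : M (g - p).
    by by_M (w * (g * g - (p * g + q)) + w * q - (w * g - 1) * (g - p)).
  by apply: nRg; rewrite -(subrK p g); in_R.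
have [s Rs Hs] := local_unitM Rq nMq.
by exists p, s; split=> //; by_M (s * (g * g - (p * g + q)) + (s * q - 1)).
Qed.

(* From y e = a y + b e + c one gets (y - b)(e - a) = a b + c modulo M,
   and e - a is invertible modulo M. *)
Lemma local_R1_span e y : local_with R1 M -> R1 e -> ~ R e -> R1 y ->
  exists u v, [/\ R u, R v & M (y - (u + v * e))].
Proof.
move=> hloc Re nRe Ry; have [a [b [c [Ra Rb Rc Hye]]]] := quadraticM Ry Re.
have Rea : R1 (e - a) by in_R1.
have nRea : ~ R (e - a) by move=> Rea'; apply: nRe; rewrite -(subrK a e); in_R.
have [p [s [Rp Rs Hg]]] := local_R1_inverse hloc Rea nRea.
exists (b - (a * b + c) * s * (a + p)), ((a * b + c) * s); split; [in_R | in_R |].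
by by_M (- (y - b) * ((e - a) * (s * ((e - a) - p)) - 1)
         + (y * e - (y * a + e * b + c)) * (s * ((e - a) - p))).
Qed.

Lemma notR_independent e u v : R1 e -> ~ R e -> R u -> R v -> M (u + v * e) -> M u /\ M v.
Proof.
move=> Re nRe Ru Rv Muv.
have Mv : M v.
  apply: NNPP => nMv; have [s Rs Hs] := local_unitM Rv nMv.
  have Me : M (e + s * u) by by_M (s * (u + v * e) - (s * v - 1) * e).
  by apply: nRe; rewrite -(addrK (s * u) e); in_R.
by split=> //; by_M ((u + v * e) - v * e).
Qed.

Lemma R1_local_radicalM e : R1 e -> ~ R e -> local R1 -> set_eq (Jac R1) M ->
  [/\ set_eq R1 (E (Jac R1)), maximal_ideal R1 M & residue_dim R M R1 M 2].
Proof.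
move=> Re nRe [N hN] JM.
have hloc : local_with R1 M.
  apply: (local_with_set_eq _ hN) => x.
  by split=> [/(local_Jac hN x) /JM | /JM /(local_Jac hN x)].
split; [exact: E_set_eq (fun x => iff_sym (JM x)) | exact: hloc.1 |].
exists (fun i : 'I_2 => if val i == 0%N then 1 else e); split.
- by case=> [[|i] Hi] /=; [exact: subring1 R1_subring |].
- move=> y Ry; have [u [v [Ru Rv Hy]]] := local_R1_span hloc Re nRe Ry.
  exists (fun i : 'I_2 => if val i == 0%N then u else v).
  by split; [case=> [[|i] Hi] | rewrite big_ord_recl big_ord1 /= mulr1].
- move=> a Ra; rewrite big_ord_recl big_ord1 /= mulr1.
  move=> /(notR_independent Re nRe (Ra _) (Ra _)) [Ma0 Ma1].
  case=> [[|[|//]] Hi].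
  + by rewrite (_ : Ordinal Hi = ord0) //; apply: val_inj.
  + by rewrite (_ : Ordinal Hi = lift ord0 ord0) //; apply: val_inj.
Qed.

Definition nontrivial_idempotentM f := [/\ R1 f, M (f * f - f), ~ M f & ~ M (1 - f)].

(* x (x - p) = q lies in Na, so q lies in M; as Nb is prime and x is not in
   Nb, x - p lies in Nb, so p is a unit of R and x / p is idempotent mod M. *)
Lemma idempotent_of_separated Na Nb x : maximal_ideal R1 Na -> maximal_ideal R1 Nb ->
  Na x -> ~ Nb x -> exists f, nontrivial_idempotentM f.
Proof.
move=> hNa hNb Nax nNbx; have Rx := ideal_sub hNa.1.1 Nax.
have [p [q [Rp Rq Hx]]] := monicM Rx.
have Mq : M q.
  by apply: (maximal_capR hNa Rq); by_N hNa (x * (x - p) - (x * x - (p * x + q))).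
have Nbxp : Nb (x - p).
  apply: (maximal_ideal_prime R1_subring hNb (a := x)) => //; first by in_R1.
  by by_N hNb ((x * x - (p * x + q)) + q).
have nMp : ~ M p by move=> Mp; apply: nNbx; by_N hNb ((x - p) + p).
have [s Rs Hs] := local_unitM Rp nMp.
exists (s * x); split.
- by in_R1.
- by by_M (s * s * (x * x - (p * x + q)) + s * s * q + s * x * (s * p - 1)).
- by move=> Msx; apply: nNbx; by_N hNb (p * (s * x) - (s * p - 1) * x).
- by move=> M1sx; apply: hNa.1.2; by_N hNa ((1 - s * x) + s * x).
Qed.

Lemma not_local_idempotent : ~ local R1 -> exists f, nontrivial_idempotentM f.
Proof.
move=> nloc; have [N0 hN0] := exists_maximal_R1.
have [N1 hN1 neqN] : exists2 N1, maximal_ideal R1 N1 & ~ set_eq N1 N0.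
  apply: NNPP => nex; apply: nloc; exists N0; split=> // N hN.
  by apply: NNPP => neqN; apply: nex; exists N.
have [x nx] : exists x, ~ (N1 x <-> N0 x).
  by apply: NNPP => nex; apply: neqN => x; apply: NNPP => h; apply: nex; exists x.
have [N1x|nN1x] := classic (N1 x).
  by apply: (idempotent_of_separated hN1 hN0 N1x) => N0x; apply: nx; split=> _.
apply: (idempotent_of_separated hN0 hN1 _ nN1x).
by apply: NNPP => nN0x; apply: nx; split=> [/nN1x [] | /nN0x []].
Qed.

(* x = f y + 1 - f satisfies x^2 = 1 - f modulo M.  Multiplying x^2 = P x + C
   by 1 - f gives P + C = 1, and by f gives P f y + C f = 0, hence C f y = 0;
   so f y = 0 whether or not C is a unit. *)
Lemma idempotent_mul_JacM f y : R1 f -> M (f * f - f) -> ~ M (1 - f) ->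
  Jac R1 y -> M (f * y).
Proof.
move=> Rf Hf nM1f [Ry Jy].
have Jfy : Jac R1 (f * y).
  by split=> [|N hN]; [in_R1 | apply: (idealM hN.1.1 Rf (Jy N hN))].
have Mfyfy := Jac_sqrM Jfy.
have Rx : R1 (f * y + (1 - f)) by in_R1.
have [P [C [RP RC Hx]]] := monicM Rx.
have F1 : M (f * (f * y) - f * y) by by_M ((f * f - f) * y).
have F2 : M (f * (1 - f)) by by_M (- (f * f - f)).
have F3 : M ((f * y) * (1 - f)) by by_M (y * (f * (1 - f))).
have F4 : M ((f * y + (1 - f)) * (f * y + (1 - f)) - (1 - f)).
  by by_M ((f * y) * (f * y) + (1 + 1) * ((f * y) * (1 - f)) - f * (1 - f)).
have F5 : M (f * (f * y + (1 - f)) - f * y) by by_M ((f * (f * y) - f * y) + f * (1 - f)).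
have F6 : M ((1 - f) * (f * y + (1 - f)) - (1 - f)).
  by by_M ((f * y) * (1 - f) - f * (1 - f)).
have A : M (P * (f * y) + C * f).
  by by_M (- f * ((f * y + (1 - f)) * (f * y + (1 - f)) - (P * (f * y + (1 - f)) + C))
     + f * ((f * y + (1 - f)) * (f * y + (1 - f)) - (1 - f)) + f * (1 - f)
     - P * (f * (f * y + (1 - f)) - f * y)).
have B : M ((1 - P - C) * (1 - f)).
  by by_M ((1 - f) * ((f * y + (1 - f)) * (f * y + (1 - f)) - (P * (f * y + (1 - f)) + C))
     - (1 - f) * ((f * y + (1 - f)) * (f * y + (1 - f)) - (1 - f)) + f * (1 - f)
     + P * ((1 - f) * (f * y + (1 - f)) - (1 - f))).
have MPC : M (1 - P - C) by apply: (M_factorR _ _ B) => //; [in_R | in_R1].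
have Cfy : M ((f * y) * C).
  by by_M ((f * y) * (P * (f * y) + C * f) - P * ((f * y) * (f * y))
           - C * (f * (f * y) - f * y)).
have [MC|nMC] := classic (M C); last by apply: (M_cancelR RC nMC _ Cfy); in_R1.
by by_M ((1 - P - C) * (f * y) + (P * (f * y) + C * f) - C * f + C * (f * y)).
Qed.

Lemma Jac_eqM_of_idempotent f : nontrivial_idempotentM f -> set_eq (Jac R1) M.
Proof.
move=> [Rf Hf nMf nM1f] y; split=> [Jy|/M_sub_Jac //].
have Mfy := idempotent_mul_JacM Rf Hf nM1f Jy.
have M1fy : M ((1 - f) * y).
  apply: (idempotent_mul_JacM _ _ _ Jy); [in_R1 | by_M (f * f - f) |].
  by rewrite opprB addrC subrK.
by by_M (f * y + (1 - f) * y).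
Qed.

Definition reducedM := forall z, R1 z -> M (z * z) -> M z.

Lemma reducedM_of_Jac_eqM : set_eq (Jac R1) M -> reducedM.
Proof.
move=> JM z Rz Mzz; apply/JM; split=> // N hN; apply: NNPP => nNz.
exact/nNz/(maximal_ideal_prime R1_subring hN Rz Rz (M_sub_maximal hN Mzz) nNz).
Qed.

Definition primitiveM f := forall y, R1 y -> exists l, R l /\ M (f * y - l * f).

Definition split_idempotent f g :=
  [/\ R1 g, M (g * g - g), M (f * g - g), ~ M g & ~ M (f - g)].

(* (f y)^2 = a f y modulo M; if a is a unit, then f y / a is an idempotent
   below f, which is either 0, or f, or splits f. *)
Lemma unsplit_primitiveM f : reducedM -> R1 f -> M (f * f - f) -> ~ M (1 - f) ->
  ~ (exists g, split_idempotent f g) -> primitiveM f.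
Proof.
move=> hred Rf Hf nM1f nsplit y Ry.
have Rz : R1 (f * y) by in_R1.
have [a [c [Ra Rc Hz]]] := monicM Rz.
have H1z : M ((1 - f) * (f * y)) by by_M (- (f * f - f) * y).
have Mc1 : M (c * (1 - f)).
  by by_M (((1 - f) * (f * y)) * (f * y) - a * ((1 - f) * (f * y))
           - (1 - f) * ((f * y) * (f * y) - (a * (f * y) + c))).
have Mc : M c by apply: (M_factorR _ _ Mc1) => //; in_R1.
have Mz2 : M ((f * y) * (f * y) - a * (f * y)).
  by by_M (((f * y) * (f * y) - (a * (f * y) + c)) + c).
have [Ma|nMa] := classic (M a).
  have Mz : M (f * y).
    by apply: hred => //; by_M (((f * y) * (f * y) - a * (f * y)) + a * (f * y)).
  by exists 0; split; [exact: subring0 hR | by_M (f * y)].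
have [s Rs Hs] := local_unitM Ra nMa.
have [Mg|nMg] := classic (M (s * (f * y))).
  by exists 0; split; [exact: subring0 hR | by_M (a * (s * (f * y)) - (s * a - 1) * (f * y))].
have [Mfg|nMfg] := classic (M (f - s * (f * y))).
  by exists a; split=> //; by_M (- a * (f - s * (f * y)) - (s * a - 1) * (f * y)).
exfalso; apply: nsplit; exists (s * (f * y)); split=> //; first by in_R1.
- by by_M (s * s * ((f * y) * (f * y) - a * (f * y)) + s * (f * y) * (s * a - 1)).
- by by_M (s * y * (f * f - f)).
Qed.

(* (e1 + e2) (e2 + e3) = a (e1 + e2) + b (e2 + e3) + c: multiplying by e4, e1,
   e3 gives c, a, b in M, and then multiplying by e2 gives e2 in M. *)
Lemma no_four_orthogonal_idempotents e1 e2 e3 e4 :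
  R1 e1 -> R1 e2 -> R1 e3 -> R1 e4 ->
  M (e1 * e1 - e1) -> M (e2 * e2 - e2) -> M (e3 * e3 - e3) ->
  M (e1 * e2) -> M (e1 * e3) -> M (e1 * e4) -> M (e2 * e3) -> M (e2 * e4) ->
  M (e3 * e4) -> ~ M e1 -> ~ M e2 -> ~ M e3 -> ~ M e4 -> False.
Proof.
move=> R1e R2e R3e R4e I1 I2 I3 O12 O13 O14 O23 O24 O34 n1 n2 n3 n4.
have R12 : R1 (e1 + e2) by in_R1.
have R23 : R1 (e2 + e3) by in_R1.
have [a [b [c [Ra Rb Rc H]]]] := quadraticM R12 R23.
have Mc : M c.
  apply: (@M_factorR c e4) => //.
  by by_M (- (e4 * ((e1 + e2) * (e2 + e3) - ((e1 + e2) * a + (e2 + e3) * b + c)))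
     + (e1 * e4 + e2 * e4) * (e2 + e3) - a * (e1 * e4 + e2 * e4)
     - b * (e2 * e4 + e3 * e4)).
have Ma : M a.
  apply: (@M_factorR a e1) => //.
  by by_M (- (e1 * ((e1 + e2) * (e2 + e3) - ((e1 + e2) * a + (e2 + e3) * b + c)))
     + (e1 * e2) * (e1 + e2 + e3) + (e1 * e3) * e1 - a * ((e1 * e1 - e1) + e1 * e2)
     - b * (e1 * e2 + e1 * e3) - c * e1).
have Mb : M b.
  apply: (@M_factorR b e3) => //.
  by by_M (- (e3 * ((e1 + e2) * (e2 + e3) - ((e1 + e2) * a + (e2 + e3) * b + c)))
     + (e1 * e3 + e2 * e3) * (e2 + e3) - a * (e1 * e3 + e2 * e3)
     - b * (e2 * e3 + (e3 * e3 - e3)) - c * e3).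
apply: n2.
by by_M (e2 * ((e1 + e2) * (e2 + e3) - ((e1 + e2) * a + (e2 + e3) * b + c))
   + a * (e2 * (e1 + e2)) + b * (e2 * (e2 + e3)) + c * e2
   - ((e1 * e2) * (e2 + e3) + (e2 * e3) * e2 + (e2 * e2 - e2) * (e2 + 1))).
Qed.

Lemma primitive_of_three_orthogonal f u v : reducedM -> R1 f -> R1 u -> R1 v ->
  M (f * f - f) -> M (u * u - u) -> M (v * v - v) ->
  M (f * u) -> M (f * v) -> M (u * v) -> ~ M u -> ~ M v -> primitiveM f.
Proof.
move=> hred Rf Ru Rv If Iu Iv Ofu Ofv Ouv nMu nMv.
have nM1f : ~ M (1 - f) by move=> M1f; apply: nMu; by_M (u * (1 - f) + f * u).
apply: unsplit_primitiveM => // -[g [Rg Ig gf nMg nMfg]].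
have Ogu : M (g * u) by by_M (- (f * g - g) * u + g * (f * u)).
have Ogv : M (g * v) by by_M (- (f * g - g) * v + g * (f * v)).
apply: (@no_four_orthogonal_idempotents g (f - g) u v) => //; try in_R1.
- by by_M ((f * f - f) - (1 + 1) * (f * g - g) + (g * g - g)).
- by by_M ((f * g - g) - (g * g - g)).
- by by_M (f * u - g * u).
- by by_M (f * v - g * v).
Qed.

Lemma residue_split_of_primitive n (e : 'I_n -> Q) : (forall i, R1 (e i)) ->
  (forall i j, M (e i * e j - (if i == j then e i else 0))) ->
  M (\sum_i e i - 1) -> (forall i, ~ M (e i)) -> (forall i, primitiveM (e i)) ->
  residue_split R M R1 M n.
Proof.
move=> Re Orth Msum nMe prim; exists e; split=> //; split=> // [y Ry | a Ra Msum' i].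
  have [l Hl] := fin_all_exists (fun i => prim i y Ry).
  exists l; split=> [i|]; first by case: (Hl i).
  have -> : y - \sum_i l i * e i = - ((\sum_i e i - 1) * y) + \sum_i (e i * y - l i * e i).
    by rewrite sumrB -mulr_suml; ring.
  apply: (idealD M_idealR1); first by apply: (idealN R1_subring M_idealR1); in_M.
  by apply: (big_ind M); [in_M | move=> u w; exact: idealD M_idealR1 | move=> i _; case: (Hl i)].
have R1a j : R1 (a j) by apply: (sub_E M_idealR).
apply: (@M_factorR (a i) (e i)) => //.
have -> : a i * e i = e i * (\sum_j a j * e j)
    - \sum_j a j * (e j * e i - (if j == i then e j else 0)).
  transitivity (\sum_j a j * (if j == i then e j else 0)).
    rewrite (bigD1 i) //= eqxx big1 ?addr0 // => j /negbTE ->.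
    by rewrite mulr0.
  by rewrite mulr_sumr -sumrB; apply: eq_bigr => j _; ring.
apply: (idealD M_idealR1); first by apply: (idealM M_idealR1).
apply: (idealN R1_subring M_idealR1); apply: (big_ind M); [in_M | move=> u w; exact: idealD M_idealR1 |].
by move=> j _; apply: (idealM M_idealR1).
Qed.

Lemma residue_split3 e1 e2 e3 : reducedM -> R1 e1 -> R1 e2 -> R1 e3 ->
  M (e1 * e1 - e1) -> M (e2 * e2 - e2) -> M (e3 * e3 - e3) ->
  M (e1 * e2) -> M (e1 * e3) -> M (e2 * e3) ->
  ~ M e1 -> ~ M e2 -> ~ M e3 -> e1 + e2 + e3 = 1 -> residue_split R M R1 M 3.
Proof.
move=> hred R1e R2e R3e I1 I2 I3 O12 O13 O23 n1 n2 n3 Hsum.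
have O21 : M (e2 * e1) by rewrite mulrC.
have O31 : M (e3 * e1) by rewrite mulrC.
have O32 : M (e3 * e2) by rewrite mulrC.
apply: (@residue_split_of_primitive 3 (fun i => nth 0 [:: e1; e2; e3] i)).
- by case=> [[|[|[|i]]] Hi].
- by case=> [[|[|[|i]]] Hi] [[|[|[|j]]] Hj] //=; rewrite subr0.
- by rewrite !big_ord_recl big_ord0 /= addr0 addrA Hsum subrr; in_M.
- by case=> [[|[|[|i]]] Hi].
- case=> [[|[|[|i]]] Hi] //=.
  + exact: (primitive_of_three_orthogonal hred R1e R2e R3e I1 I2 I3 O12 O13 O23 n2 n3).
  + exact: (primitive_of_three_orthogonal hred R2e R1e R3e I2 I1 I3 O21 O23 O13 n1 n3).
  + exact: (primitive_of_three_orthogonal hred R3e R1e R2e I3 I1 I2 O31 O32 O12 n1 n2).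
Qed.

(* Projecting (e1 + r e2)^2 = a (e1 + r e2) + b on e3, e1, e2 gives b = 0,
   a + b = 1 and r^2 = a r + b in F, so r (r - 1) = 0 in F. *)
Lemma residue_F2_of_three e1 e2 e3 : R1 e1 -> R1 e2 -> R1 e3 ->
  M (e1 * e1 - e1) -> M (e2 * e2 - e2) ->
  M (e1 * e2) -> M (e1 * e3) -> M (e2 * e3) ->
  ~ M e1 -> ~ M e2 -> ~ M e3 -> residue_F2 R M.
Proof.
move=> R1e R2e R3e I1 I2 O12 O13 O23 n1 n2 n3 r Rr; apply: NNPP => nn.
have nMr : ~ M r by move=> Mr; apply: nn; left.
apply: nn; right.
have Rz : R1 (e1 + r * e2) by in_R1.
have [a [b [Ra Rb H]]] := monicM Rz.
have Mb : M b.
  apply: (@M_factorR b e3) => //.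
  by by_M (- (e3 * ((e1 + r * e2) * (e1 + r * e2) - (a * (e1 + r * e2) + b)))
     + (e1 * e3 + r * (e2 * e3)) * (e1 + r * e2) - a * (e1 * e3 + r * (e2 * e3))).
have M1ab : M (1 - a - b).
  apply: (@M_factorR (1 - a - b) e1) => //; first by in_R.
  by by_M (e1 * ((e1 + r * e2) * (e1 + r * e2) - (a * (e1 + r * e2) + b))
     - (((e1 * e1 - e1) + r * (e1 * e2)) * (e1 + r * e2) + (e1 * e1 - e1) + r * (e1 * e2))
     + a * ((e1 * e1 - e1) + r * (e1 * e2))).
have Mr2 : M (r * r - a * r - b).
  apply: (@M_factorR (r * r - a * r - b) e2) => //; first by in_R.
  by by_M (e2 * ((e1 + r * e2) * (e1 + r * e2) - (a * (e1 + r * e2) + b))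
     - r * (e1 * e2 + r * (e2 * e2 - e2)) - (e1 * e2 + r * (e2 * e2 - e2)) * (e1 + r * e2)
     + a * (e1 * e2 + r * (e2 * e2 - e2))).
apply: (@M_factorR (r - 1) r) => //; [in_R | in_R1 |].
by by_M ((r * r - a * r - b) - r * (1 - a - b) + b * (1 - r)).
Qed.

Lemma residue_split3_of_split f g : reducedM -> R1 f -> M (f * f - f) -> ~ M (1 - f) ->
  split_idempotent f g -> residue_split R M R1 M 3 /\ residue_F2 R M.
Proof.
move=> hred Rf If nM1f [Rg Ig gf nMg nMfg].
have Rfg : R1 (f - g) by in_R1.
have R1f : R1 (1 - f) by in_R1.
have Ifg : M ((f - g) * (f - g) - (f - g)).
  by by_M ((f * f - f) - (1 + 1) * (f * g - g) + (g * g - g)).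
have I1f : M ((1 - f) * (1 - f) - (1 - f)) by by_M (f * f - f).
have Og : M (g * (f - g)) by by_M ((f * g - g) - (g * g - g)).
have Og1 : M (g * (1 - f)) by by_M (- (f * g - g)).
have Ofg1 : M ((f - g) * (1 - f)) by by_M (- (f * f - f) + (f * g - g)).
split.
  apply: (residue_split3 hred Rg Rfg R1f Ig Ifg I1f Og Og1 Ofg1 nMg nMfg nM1f).
  by ring.
exact: (residue_F2_of_three Rg Rfg R1f Ig Ifg Og Og1 Ofg1 nMg nMfg nM1f).
Qed.

Lemma R1_not_local : ~ local R1 ->
  [/\ set_eq (Jac R1) M, set_eq R1 (E (Jac R1)) &
      (residue_split R M R1 M 2 \/ (residue_split R M R1 M 3 /\ residue_F2 R M))].
Proof.
move=> nloc; have [f idf] := not_local_idempotent nloc.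
have JM := Jac_eqM_of_idempotent idf.
have hred := reducedM_of_Jac_eqM JM.
case: idf => Rf If nMf nM1f.
split=> //; first exact: E_set_eq (fun x => iff_sym (JM x)).
have R1f : R1 (1 - f) by in_R1.
have I1f : M ((1 - f) * (1 - f) - (1 - f)) by by_M (f * f - f).
have nM11f : ~ M (1 - (1 - f)) by rewrite opprB addrC subrK.
have [[g split_fg]|unsplit_f] := classic (exists g, split_idempotent f g).
  by right; apply: residue_split3_of_split split_fg.
have [[g split_1f]|unsplit_1f] := classic (exists g, split_idempotent (1 - f) g).
  by right; apply: residue_split3_of_split split_1f.
left; apply: (@residue_split_of_primitive 2 (fun i => nth 0 [:: f; 1 - f] i)).
- by case=> [[|[|i]] Hi].
- case=> [[|[|i]] Hi] [[|[|j]] Hj] //=; rewrite ?subr0.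
  + by by_M (- (f * f - f)).
  + by by_M (- (f * f - f)).
- by rewrite !big_ord_recl big_ord0 /= addr0 (_ : f + (1 - f) - 1 = 0); [in_M | ring].
- by case=> [[|[|i]] Hi].
- case=> [[|[|i]] Hi] //=; first exact: unsplit_primitiveM.
  exact: unsplit_primitiveM.
Qed.

End MultipliersOfM.

Theorem lemma3p7 (Q : comUnitRingType) (R M : Q -> Prop) :
  total_quotient_ring R ->
  local_with R M ->
  regular R M ->
  quadratic R (E M) ->
  ~ set_eq R (E M) ->
  let R1 := E M in
  let R2 := E (Jac R1) in
  [/\
   (* (1) *)
   (local R1 -> set_eq (Jac R1) M ->
      [/\ set_eq R1 R2, maximal_ideal R1 M & residue_dim R M R1 M 2]),
   (* (2) *)
   (forall M1, local_with R1 M1 -> ~ set_eq M1 M ->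
      set_eq R1 (fun y => exists r m, [/\ R r, M1 m & y = r + m]) /\
      residue_dim R M R1 M1 1),
   (* (3) *)
   (~ local R1 ->
      [/\ set_eq (Jac R1) M, set_eq R1 R2 &
          (residue_split R M R1 M 2 \/
           (residue_split R M R1 M 3 /\ residue_F2 R M))])
   & (* (4) *)
   (forall x y, Jac R1 x -> Jac R1 y -> M (x * y))].
Proof.
move=> [hR _ _] hM _ hq R1neR R1 R2.
have [e Re nRe] : exists2 e, E M e & ~ R e.
  apply: NNPP => nex; apply: R1neR => x; split=> [|R1x]; first exact: hq.1.
  by apply: NNPP => nRx; apply: nex; exists x.
split.
- exact: (R1_local_radicalM hR hM hq Re nRe).
- exact: R1_local_maximal_neqM hR hM hq.
- exact: R1_not_local hR hM hq.
- exact: Jac_mulM hR hM hq.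
Qed.
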